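(* Let $R$ be a ring. Then: \begin{enumerate} \item $\mathbb{L}\mathrm{Ore}_l(R)\subseteq {}'\mathbb{L}_l(R)\subseteq\mathbb{L}^p_l(R)$ and $\mathbb{L}\mathrm{Ore}_l(R)={}'\mathbb{L}_l(R)\cap\mathrm{Ore}_l(R)=\mathbb{L}^p_l(R)\cap\mathrm{Ore}_l(R)$. \item $\mathbb{L}\mathrm{Ore}_r(R)\subseteq \mathbb{L}'_r(R)\subseteq\mathbb{L}^p_r(R)$ and $\mathbb{L}\mathrm{Ore}_r(R)=\mathbb{L}'_r(R)\cap\mathrm{Ore}_r(R)=\mathbb{L}^p_r(R)\cap\mathrm{Ore}_r(R)$. \item $\mathrm{Ore}(R)\subseteq {}'\mathbb{L}'_{l,r}(R)\subseteq\mathbb{L}^p(R)$. \end{enumerate}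
   Context: Rings are associative with $1$. A multiplicative set $S\subseteq R$: $SS\subseteq S$, $1\in S$, $0\notin S$. $R\langle S^{-1}\rangle=R\langle X_S\rangle/I_S$ ($R\langle X_S\rangle$ freely generated by $R$ and noncommuting $x_s$, $s\in S$; $I_S$ generated by $sx_s-1,x_ss-1$); $\mathrm{ass}_R(S)=\ker(R\to R\langle S^{-1}\rangle)$. $S$ is left (resp. right) localizable if $R\langle S^{-1}\rangle\neq0$ and every element is of the form $(x_s+I_S)(r+I_S)$ (resp. $(r+I_S)(x_s+I_S)$), $s\in S,r\in R$; localizable if both; these sets are $\mathbb{L}_l(R),\mathbb{L}_r(R),\mathbb{L}(R)$. For a ring $A$, ${}'\mathcal{C}_A=\{r:xr=0\Rightarrow x=0\}$, $\mathcal{C}'_A=\{r:rx=0\Rightarrow x=0\}$, $\mathcal{C}_A={}'\mathcal{C}_A\cap\mathcal{C}'_A$. For a multiplicative set $S$: $\mathfrak{a}(S)$ (resp. ${}'\mathfrak{a}(S)$, $\mathfrak{a}'(S)$) is the least ideal $\mathfrak{b}$ of $R$ with image of $S$ in $R/\mathfrak{b}$ contained in $\mathcal{C}_{R/\mathfrak{b}}$ (resp. ${}'\mathcal{C}_{R/\mathfrak{b}}$, $\mathcal{C}'_{R/\mathfrak{b}}$). $\mathbb{L}^p_*(R)=\{S\in\mathbb{L}_*(R):\mathrm{ass}_R(S)=\mathfrak{a}(S)\}$ (perfect localizable sets), $*\in\{l,r,\emptyset\}$. $S$ is a left Ore set if $Sr\cap Rs\neq\emptyset$ for all $r\in R,s\in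 S$; right Ore symmetrically; Ore = left and right; $\mathrm{Ore}_l(R),\mathrm{Ore}_r(R),\mathrm{Ore}(R)$ are these sets. ${}'\mathbb{L}_l(R)$ is the set of multiplicative sets $S$ such that the image of $S$ in $R/{}'\mathfrak{a}(S)$ is a left Ore set of $R/{}'\mathfrak{a}(S)$; $\mathbb{L}'_r(R)$ is the set of multiplicative sets $S$ whose image in $R/\mathfrak{a}'(S)$ is a right Ore set; ${}'\mathbb{L}'_{l,r}(R)={}'\mathbb{L}_l(R)\cap\mathbb{L}'_r(R)$; $\mathbb{L}\mathrm{Ore}_*(R)=\mathbb{L}_*(R)\cap\mathrm{Ore}_*(R)$. *)

From HB Require Import structures.
From mathcomp Require Import all_boot all_order all_algebra.
Set Implicit Arguments. Unset Strict Implicit. Unset Printing Implicit Defensive.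
Import GRing.Theory.
Local Open Scope ring_scope.

Section Loc.
Variable R : pzRingType.

Definition mult_set (S : R -> Prop) : Prop :=
  S 1 /\ ~ S 0 /\ (forall a b, S a -> S b -> S (a * b)).

Definition is_ideal (b : R -> Prop) : Prop :=
  b 0 /\ (forall x y, b x -> b y -> b (x - y)) /\
  (forall r x, b x -> b (r * x) /\ b (x * r)).

Definition inverts {B : pzRingType} (S : R -> Prop) (f : R -> B) : Prop :=
  forall s, S s -> exists y : B, y * f s = 1 /\ f s * y = 1.

(* (A, sigma) is R<S^{-1}> = R<X_S>/I_S, characterized up to isomorphism by
   its universal property among all S-inverting ring morphisms. *)
Definition univ_loc (S : R -> Prop) (A : pzRingType) (sigma : {rmorphism R -> A})
  : Prop :=
  inverts S sigma /\
  forall (B : pzRingType) (f : {rmorphism R -> B}), inverts S f ->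
    exists g : {rmorphism A -> B},
      (forall r, g (sigma r) = f r) /\
      (forall g' : {rmorphism A -> B}, (forall r, g' (sigma r) = f r) -> g' =1 g).

(* ass_R(S) = ker (R -> R<S^{-1}>) *)
Arguments univ_loc : clear implicits.
Definition ass (S : R -> Prop) (r : R) : Prop :=
  forall (A : pzRingType) (sigma : {rmorphism R -> A}),
    univ_loc S A sigma -> sigma r = 0.

Definition left_localizable (S : R -> Prop) : Prop :=
  exists (A : pzRingType) (sigma : {rmorphism R -> A}),
    univ_loc S A sigma /\ (1 : A) <> 0 /\
    forall a : A, exists s r (y : A),
      S s /\ y * sigma s = 1 /\ sigma s * y = 1 /\ a = y * sigma r.

Definition right_localizable (S : R -> Prop) : Prop :=
  exists (A : pzRingType) (sigma : {rmorphism R -> A}),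
    univ_loc S A sigma /\ (1 : A) <> 0 /\
    forall a : A, exists s r (y : A),
      S s /\ y * sigma s = 1 /\ sigma s * y = 1 /\ a = sigma r * y.

Definition localizable (S : R -> Prop) : Prop :=
  left_localizable S /\ right_localizable S.

(* image of s in R/b lies in 'C_{R/b}: (x s = 0 => x = 0) in R/b *)
Definition lreg_mod (b : R -> Prop) (s : R) : Prop := forall x, b (x * s) -> b x.
(* image of s in R/b lies in C'_{R/b}: (s x = 0 => x = 0) in R/b *)
Definition rreg_mod (b : R -> Prop) (s : R) : Prop := forall x, b (s * x) -> b x.

(* 'a(S): least ideal b with image of S in 'C_{R/b} (intersection of all such) *)
Definition la (S : R -> Prop) (r : R) : Prop :=
  forall b, is_ideal b -> (forall s, S s -> lreg_mod b s) -> b r.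
Definition ra (S : R -> Prop) (r : R) : Prop :=
  forall b, is_ideal b -> (forall s, S s -> rreg_mod b s) -> b r.
Definition a (S : R -> Prop) (r : R) : Prop :=
  forall b, is_ideal b -> (forall s, S s -> lreg_mod b s /\ rreg_mod b s) -> b r.

(* image of S in R/b is a left (resp. right) Ore set of R/b; in particular
   a multiplicative set of R/b, i.e. 0 is not in the image *)
Definition left_Ore_mod (b : R -> Prop) (S : R -> Prop) : Prop :=
  (forall s, S s -> ~ b s) /\
  forall r s, S s -> exists s' r', S s' /\ b (s' * r - r' * s).
Definition right_Ore_mod (b : R -> Prop) (S : R -> Prop) : Prop :=
  (forall s, S s -> ~ b s) /\
  forall r s, S s -> exists s' r', S s' /\ b (r * s' - s * r').

Definition left_Ore (S : R -> Prop) : Prop :=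
  forall r s, S s -> exists s' r', S s' /\ s' * r = r' * s.
Definition right_Ore (S : R -> Prop) : Prop :=
  forall r s, S s -> exists s' r', S s' /\ r * s' = s * r'.
Definition Ore (S : R -> Prop) : Prop := left_Ore S /\ right_Ore S.

Definition perfect_left_localizable (S : R -> Prop) : Prop :=
  left_localizable S /\ forall r, ass S r <-> a S r.
Definition perfect_right_localizable (S : R -> Prop) : Prop :=
  right_localizable S /\ forall r, ass S r <-> a S r.
Definition perfect_localizable (S : R -> Prop) : Prop :=
  localizable S /\ forall r, ass S r <-> a S r.

Definition Lpre_l (S : R -> Prop) : Prop := left_Ore_mod (la S) S.
Definition Lpost_r (S : R -> Prop) : Prop := right_Ore_mod (ra S) S.
Definition Lpre_post_lr (S : R -> Prop) : Prop := Lpre_l S /\ Lpost_r S.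

Definition LOre_l (S : R -> Prop) : Prop := left_localizable S /\ left_Ore S.
Definition LOre_r (S : R -> Prop) : Prop := right_localizable S /\ right_Ore S.

End Loc.
Arguments univ_loc {R} S A sigma.

From HB Require Import structures.
From mathcomp Require Import all_boot all_order all_algebra.
From mathcomp Require Import boolp.
From Stdlib Require Import Setoid Morphisms RelationClasses.
Set Implicit Arguments. Unset Strict Implicit. Unset Printing Implicit Defensive.
Import GRing.Theory.
Local Open Scope ring_scope.

(* Let S be in 'L_l(R) and let T be the ideal of those r with t r in 'a(S)
   for some t in S (the preimage of the S-torsion of R/'a(S)).  Modulo T the
   set S is regular on both sides and still left Ore, so the classical calculus
   of left fractions s^-1 r yields a ring; it is R<S^-1> because every
   S-inverting morphism kills 'a(S).  Its kernel T lies in a(S), since t r in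
   a(S) forces r in a(S), and a(S) <= ass(S) holds for every S.
   If S is left localizable, then ass(S) >= 'a(S) misses S, and the left Ore
   condition passes to R/'a(S).  The right-hand statements follow by passing
   to the opposite ring, and an Ore set lies in both classes since S is
   regular modulo the ideal {r | s r t = 0 for some s, t in S}, which misses S. *)

(** * Ideals attached to a multiplicative set *)

Section Ideals.
Variable R : pzRingType.
Implicit Types (S b : R -> Prop) (r s x y : R).

Lemma idealB b x y : is_ideal b -> b x -> b y -> b (x - y).
Proof. by move=> [_ [bB _]]; exact: bB. Qed.

Lemma idealMl b r x : is_ideal b -> b x -> b (r * x).
Proof. by move=> [_ [_ bM]] bx; exact: (bM r x bx).1. Qed.

Lemma idealMr b r x : is_ideal b -> b x -> b (x * r).
Proof. by move=> [_ [_ bM]] bx; exact: (bM r x bx).2. Qed.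

Lemma idealN b x : is_ideal b -> b x -> b (- x).
Proof. by move=> ib bx; rewrite -sub0r; apply: idealB ib ib.1 bx. Qed.

Lemma idealD b x y : is_ideal b -> b x -> b y -> b (x + y).
Proof. by move=> ib bx by'; rewrite -[y]opprK; apply: idealB ib bx (idealN ib by'). Qed.

Lemma is_ideal_conv b : is_ideal (R := R^c) b <-> is_ideal b.
Proof. by split=> -[b0 [bB bM]]; split=> //; split=> // r x /(bM r x) []. Qed.

Lemma mult_set_conv S : mult_set S -> mult_set (R := R^c) S.
Proof. by move=> [S1 [S0 SM]]; split=> //; split=> // a b Sa Sb; exact: SM. Qed.

Lemma least_ideal_is_ideal (P : (R -> Prop) -> Prop) :
  is_ideal (fun r => forall b, is_ideal b -> P b -> b r).
Proof.
split; [by move=> b [] | split].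
- by move=> x y hx hy b ib Pb; apply: idealB ib (hx b ib Pb) (hy b ib Pb).
- by move=> r x hx; split=> b ib Pb; [apply: idealMl | apply: idealMr] => //; exact: hx.
Qed.

Lemma la_ideal S : is_ideal (la S).
Proof. exact: least_ideal_is_ideal. Qed.

Lemma ra_ideal S : is_ideal (ra S).
Proof. exact: least_ideal_is_ideal. Qed.

Lemma la_lreg S s : S s -> lreg_mod (la S) s.
Proof. by move=> Ss x h b ib hb; exact: (hb s Ss x (h b ib hb)). Qed.

Lemma a_lreg S s : S s -> lreg_mod (a S) s.
Proof. by move=> Ss x h b ib hb; exact: ((hb s Ss).1 x (h b ib hb)). Qed.

Lemma a_rreg S s : S s -> rreg_mod (a S) s.
Proof. by move=> Ss x h b ib hb; exact: ((hb s Ss).2 x (h b ib hb)). Qed.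

Lemma la_a S r : la S r -> a S r.
Proof. by move=> h b ib hb; apply: h ib _ => s /hb []. Qed.

Lemma ra_a S r : ra S r -> a S r.
Proof. by move=> h b ib hb; apply: h ib _ => s /hb []. Qed.

Lemma la_conv S : la (R := R^c) S = ra S.
Proof.
apply/funext=> r; apply/propext.
by split=> h b /is_ideal_conv ib hb; apply: h.
Qed.

End Ideals.

Section Kernels.
Variables (R : pzRingType) (S : R -> Prop).

Lemma ker_is_ideal (A : pzRingType) (f : {rmorphism R -> A}) :
  is_ideal (fun r => f r = 0).
Proof.
split; [exact: rmorph0 | split].
- by move=> x y fx fy; rewrite rmorphB fx fy subrr.
- by move=> r x fx; rewrite !rmorphM fx mulr0 mul0r.
Qed.

Lemma inverts_reg (A : pzRingType) (f : {rmorphism R -> A}) s : inverts S f -> S s ->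
  lreg_mod (fun r => f r = 0) s /\ rreg_mod (fun r => f r = 0) s.
Proof.
move=> fS Ss; have [y [ys sy]] := fS s Ss; split=> x; rewrite rmorphM => fx0.
- by rewrite -[f x]mulr1 -sy mulrA fx0 mul0r.
- by rewrite -[f x]mul1r -ys -mulrA fx0 mulr0.
Qed.

Lemma la_ker (A : pzRingType) (f : {rmorphism R -> A}) r :
  inverts S f -> la S r -> f r = 0.
Proof.
move=> fS /(_ (fun r => f r = 0)); apply; first exact: ker_is_ideal.
by move=> s /(inverts_reg fS) [].
Qed.

Lemma a_ker (A : pzRingType) (f : {rmorphism R -> A}) r :
  inverts S f -> a S r -> f r = 0.
Proof.
move=> fS /(_ (fun r => f r = 0)); apply; first exact: ker_is_ideal.
by move=> s /(inverts_reg fS).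
Qed.

Lemma a_ass r : a S r -> ass S r.
Proof. by move=> ar A sigma [sigmaS _]; exact: a_ker sigmaS ar. Qed.

Lemma ass_notin (A : pzRingType) (sigma : {rmorphism R -> A}) s :
  univ_loc S A sigma -> (1 : A) <> 0 -> S s -> ~ ass S s.
Proof.
move=> U A_nz Ss ass_s; have [y [ys _]] := U.1 s Ss.
by apply: A_nz; rewrite -ys (ass_s A sigma U) mulr0.
Qed.

End Kernels.

(** * The ring of left fractions *)

Section LeftOreLocalization.
Variables (R : pzRingType) (S : R -> Prop).
Hypotheses (mS : mult_set S) (Lpre_S : Lpre_l S).

Let S1 : S 1 := mS.1.
Let SM : forall a b, S a -> S b -> S (a * b) := mS.2.2.

Definition torsion x := exists2 t, S t & la S (t * x).

Lemma torsion_ideal : is_ideal torsion.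
Proof.
have laI := la_ideal S; have [_ la_Ore] := Lpre_S.
split; [by exists 1; rewrite // mulr0; exact: laI.1 | split].
- move=> x y [t1 St1 h1] [t2 St2 h2].
  have [c [d [Sc e]]] := la_Ore t1 t2 St2.
  exists (c * t1); first exact: SM.
  have -> : c * t1 * (x - y) = c * (t1 * x) - ((c * t1 - d * t2) * y + d * (t2 * y)).
    by rewrite mulrBr mulrBl (mulrA d) subrK mulrA.
  apply: (idealB laI (idealMl _ laI h1)).
  exact: idealD laI (idealMr _ laI e) (idealMl _ laI h2).
- move=> r x [t St h]; split.
  + have [c [d [Sc e]]] := la_Ore r t St; exists c => //.
    have -> : c * (r * x) = (c * r - d * t) * x + d * (t * x).
      by rewrite mulrBl (mulrA d) subrK mulrA.
    exact: idealD laI (idealMr _ laI e) (idealMl _ laI h).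
  + by exists t => //; rewrite mulrA; exact: idealMr _ laI h.
Qed.

Lemma torsion_notin s : S s -> ~ torsion s.
Proof. by move=> Ss [t St h]; exact: Lpre_S.1 _ (SM St Ss) h. Qed.

Lemma torsion_lreg x s : S s -> torsion (x * s) -> torsion x.
Proof. by move=> Ss [t St h]; exists t => //; apply: (la_lreg Ss); rewrite -mulrA. Qed.

Lemma torsion_rreg x s : S s -> torsion (s * x) -> torsion x.
Proof. by move=> Ss [t St h]; exists (t * s); [exact: SM | rewrite -mulrA]. Qed.

Definition eqv x y := torsion (x - y).
Arguments eqv : simpl never.

#[local] Instance eqv_equiv : Equivalence eqv.
Proof.
split.
- by move=> x; rewrite /eqv subrr; exact: torsion_ideal.1.
- by move=> x y h; rewrite /eqv -opprB; exact: idealN torsion_ideal h.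
- move=> x y z h1 h2; rewrite /eqv -[x](subrK y) -addrA.
  exact: idealD torsion_ideal h1 h2.
Qed.

#[local] Hint Extern 0 (eqv _ _) => reflexivity : core.

#[local] Instance add_eqv : Proper (eqv ==> eqv ==> eqv) (@GRing.add R).
Proof.
move=> x x' hx y y' hy; rewrite /eqv opprD addrACA.
exact: idealD torsion_ideal hx hy.
Qed.

#[local] Instance mul_eqv : Proper (eqv ==> eqv ==> eqv) (@GRing.mul R).
Proof.
move=> x x' hx y y' hy; rewrite /eqv.
have -> : x * y - x' * y' = (x - x') * y + x' * (y - y').
  by rewrite mulrBl mulrBr addrA subrK.
exact: idealD torsion_ideal (idealMr _ torsion_ideal hx) (idealMl _ torsion_ideal hy).
Qed.

#[local] Instance opp_eqv : Proper (eqv ==> eqv) (@GRing.opp R).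
Proof. by move=> x x' hx; rewrite /eqv -opprD; exact: idealN torsion_ideal hx. Qed.

Lemma eqv_cancelr x y s : S s -> eqv (x * s) (y * s) -> eqv x y.
Proof. by move=> Ss h; apply: (torsion_lreg Ss); rewrite mulrBl. Qed.

Lemma eqv_cancell x y s : S s -> eqv (s * x) (s * y) -> eqv x y.
Proof. by move=> Ss h; apply: (torsion_rreg Ss); rewrite mulrBr. Qed.

Lemma eqv_Ore r s : S s -> exists s' r', S s' /\ eqv (s' * r) (r' * s).
Proof.
move=> Ss; have [s' [r' [Ss' h]]] := Lpre_S.2 r s Ss.
by exists s', r'; split=> //; exists 1; rewrite ?mul1r.
Qed.

(* An element q of the localization is represented by the graph of [x |-> x q],
   restricted to the x for which [x q] lies in R, and read modulo the torsion. *)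
Record frac_graph (G : R -> R -> Prop) : Prop := FracGraph {
  fg_eqv : forall x y x' y', G x y -> eqv x x' -> eqv y y' -> G x' y';
  fg_mull : forall c x y, G x y -> G (c * x) (c * y);
  fg_add : forall x1 y1 x2 y2, G x1 y1 -> G x2 y2 -> G (x1 + x2) (y1 + y2);
  fg_fun : forall x y y', G x y -> G x y' -> eqv y y';
  fg_dom : forall x, exists t y, S t /\ G (t * x) y;
  fg_cancel : forall t x y, S t -> G (t * x) (t * y) -> G x y }.
Arguments fg_eqv {G} _ {x y x' y'} _ _ _.
Arguments fg_mull {G} _ c {x y} _.
Arguments fg_add {G} _ {x1 y1 x2 y2} _ _.
Arguments fg_fun {G} _ {x y y'} _ _.
Arguments fg_dom {G} _ x.
Arguments fg_cancel {G} _ {t x y} _ _.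

Lemma fg_eqvl G x y x' : frac_graph G -> G x y -> eqv x x' -> G x' y.
Proof. by move=> fG h e; apply: (fg_eqv fG h e); reflexivity. Qed.

Lemma fg_eqvr G x y y' : frac_graph G -> G x y -> eqv y y' -> G x y'.
Proof. by move=> fG h; apply: (fg_eqv fG h); reflexivity. Qed.

Lemma fg_fun_eqv G x y x' y' :
  frac_graph G -> G x y -> G x' y' -> eqv x x' -> eqv y y'.
Proof. by move=> fG h h' e; exact: (fg_fun fG (fg_eqvl fG h e) h'). Qed.

Lemma frac_graph_sub G H : frac_graph G -> frac_graph H ->
  (forall x y, G x y -> H x y) -> forall x y, H x y -> G x y.
Proof.
move=> fG fH GH x y Hxy; have [t [z [St Gtxz]]] := fg_dom fG x.
apply: (fg_cancel fG St); apply: (fg_eqvr fG Gtxz).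
exact: (fg_fun fH (GH _ _ Gtxz) (fg_mull fH t Hxy)).
Qed.

Definition rmul_rel r x y := eqv (x * r) y.
Definition opp_rel (G : R -> R -> Prop) x y := G x (- y).
Definition add_rel (G H : R -> R -> Prop) x y :=
  exists t a b, [/\ S t, G (t * x) a, H (t * x) b & eqv (t * y) (a + b)].
Definition mul_rel (G H : R -> R -> Prop) x y :=
  exists t z, [/\ S t, G (t * x) z & H z (t * y)].
Definition inv_rel s x y := eqv x (y * s).

Lemma add_relI (G H : R -> R -> Prop) x y a b :
  G x a -> H x b -> eqv y (a + b) -> add_rel G H x y.
Proof. by move=> Ga Hb e; exists 1, a, b; rewrite !mul1r. Qed.

Lemma mul_relI (G H : R -> R -> Prop) x y z : G x z -> H z y -> mul_rel G H x y.
Proof. by move=> Gz Hz; exists 1, z; rewrite !mul1r. Qed.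

Lemma frac_graph_rmul r : frac_graph (rmul_rel r).
Proof.
rewrite /rmul_rel; split.
- by move=> x y x' y' h hx hy; rewrite -hx -hy.
- by move=> c x y h; rewrite -mulrA h.
- by move=> x1 y1 x2 y2 h1 h2; rewrite mulrDl h1 h2.
- by move=> x y y' h1 h2; rewrite -h1.
- by move=> x; exists 1, (1 * x * r); split; [exact: S1 |].
- by move=> t x y St h; apply: (eqv_cancell St); rewrite mulrA.
Qed.

Lemma frac_graph_opp G : frac_graph G -> frac_graph (opp_rel G).
Proof.
move=> fG; rewrite /opp_rel; split.
- by move=> x y x' y' h hx hy; apply: (fg_eqv fG h hx); rewrite hy.
- by move=> c x y h; rewrite -mulrN; exact: fg_mull.
- by move=> x1 y1 x2 y2 h1 h2; rewrite opprD; exact: fg_add.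
- by move=> x y y' h1 h2; rewrite -[y]opprK -[y'] opprK (fg_fun fG h1 h2).
- by move=> x; have [t [y [St h]]] := fg_dom fG x; exists t, (- y); rewrite opprK.
- by move=> t x y St h; rewrite -mulrN in h; exact: (fg_cancel fG St).
Qed.

Lemma frac_graph_inv s : S s -> frac_graph (inv_rel s).
Proof.
move=> Ss; rewrite /inv_rel; split.
- by move=> x y x' y' h hx hy; rewrite -hx -hy.
- by move=> c x y h; rewrite h mulrA.
- by move=> x1 y1 x2 y2 h1 h2; rewrite h1 h2 mulrDl.
- by move=> x y y' h1 h2; apply: (eqv_cancelr Ss); rewrite -h1 -h2.
- by move=> x; have [t [r [St e]]] := eqv_Ore x Ss; exists t, r.
- by move=> t x y St h; apply: (eqv_cancell St); rewrite h mulrA.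
Qed.

Lemma fg_common_denom K x1 x2 t1 t2 a1 a2 c d : frac_graph K ->
  K (t1 * x1) a1 -> K (t2 * x2) a2 -> eqv (c * t1) (d * t2) ->
  K (c * t1 * (x1 + x2)) (c * a1 + d * a2).
Proof.
move=> fK h1 h2 e; rewrite mulrDr; apply: (fg_add fK).
- by rewrite -mulrA; exact: fg_mull.
- by apply: (fg_eqvl fK (fg_mull fK d h2)); rewrite mulrA e.
Qed.

Lemma fg_fun_denom G x t t' a a' c d : frac_graph G ->
  G (t * x) a -> G (t' * x) a' -> eqv (c * t) (d * t') -> eqv (c * a) (d * a').
Proof.
move=> fG h h' e; apply: (fg_fun_eqv fG (fg_mull fG c h) (fg_mull fG d h')).
by rewrite !mulrA e.
Qed.

Lemma frac_graph_add G H : frac_graph G -> frac_graph H -> frac_graph (add_rel G H).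
Proof.
move=> fG fH; split.
- move=> x y x' y' [t [a [b [St hG hH e]]]] hx hy; exists t, a, b; split=> //.
  + by apply: (fg_eqvl fG hG); rewrite hx.
  + by apply: (fg_eqvl fH hH); rewrite hx.
  + by rewrite -hy.
- move=> c x y [t [a [b [St hG hH e]]]].
  have [t' [d [St' e']]] := eqv_Ore c St.
  have ex : eqv (d * (t * x)) (t' * (c * x)) by rewrite !mulrA e'.
  exists t', (d * a), (d * b); split=> //.
  + exact: (fg_eqvl fG (fg_mull fG d hG) ex).
  + exact: (fg_eqvl fH (fg_mull fH d hH) ex).
  + by rewrite mulrA e' -mulrA e mulrDr.
- move=> x1 y1 x2 y2 [t1 [a1 [b1 [St1 hG1 hH1 e1]]]] [t2 [a2 [b2 [St2 hG2 hH2 e2]]]].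
  have [c [d [Sc e]]] := eqv_Ore t1 St2.
  exists (c * t1), (c * a1 + d * a2), (c * b1 + d * b2); split.
  + exact: SM.
  + exact: (fg_common_denom fG hG1 hG2 e).
  + exact: (fg_common_denom fH hH1 hH2 e).
  + by rewrite mulrDr -mulrA e1 e -mulrA e2 !mulrDr addrACA.
- move=> x y y' [t [a [b [St hG hH e]]]] [t' [a' [b' [St' hG' hH' e']]]].
  have [c [d [Sc ec]]] := eqv_Ore t St'.
  apply: (eqv_cancell (SM Sc St)).
  rewrite -mulrA e mulrDr (fg_fun_denom fG hG hG' ec) (fg_fun_denom fH hH hH' ec).
  by rewrite -mulrDr -e' mulrA ec.
- move=> x; have [t1 [a [St1 hG]]] := fg_dom fG x.
  have [t2 [b [St2 hH]]] := fg_dom fH (t1 * x).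
  exists (t2 * t1), (t2 * a + b); split; first exact: SM.
  by apply: (add_relI (a := t2 * a) (b := b)); rewrite -?mulrA //; exact: fg_mull.
- move=> t0 x y St0 [t [a [b [St hG hH e]]]].
  by exists (t * t0), a, b; rewrite -!mulrA; split=> //; exact: SM.
Qed.

Lemma frac_graph_mul G H : frac_graph G -> frac_graph H -> frac_graph (mul_rel G H).
Proof.
move=> fG fH; split.
- move=> x y x' y' [t [z [St hG hH]]] hx hy; exists t, z; split=> //.
  + by apply: (fg_eqvl fG hG); rewrite hx.
  + by apply: (fg_eqvr fH hH); rewrite hy.
- move=> c x y [t [z [St hG hH]]].
  have [t' [d [St' e']]] := eqv_Ore c St.
  exists t', (d * z); split=> //.
  + by apply: (fg_eqvl fG (fg_mull fG d hG)); rewrite !mulrA e'.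
  + by apply: (fg_eqvr fH (fg_mull fH d hH)); rewrite !mulrA e'.
- move=> x1 y1 x2 y2 [t1 [z1 [St1 hG1 hH1]]] [t2 [z2 [St2 hG2 hH2]]].
  have [c [d [Sc e]]] := eqv_Ore t1 St2.
  exists (c * t1), (c * z1 + d * z2); split; first exact: SM.
  + exact: (fg_common_denom fG hG1 hG2 e).
  + apply: (fg_eqvr fH (fg_add fH (fg_mull fH c hH1) (fg_mull fH d hH2))).
    by rewrite !mulrA mulrDr -e.
- move=> x y y' [t [z [St hG hH]]] [t' [z' [St' hG' hH']]].
  have [c [d [Sc ec]]] := eqv_Ore t St'.
  have ez := fg_fun_denom fG hG hG' ec.
  have e := fg_fun_eqv fH (fg_mull fH c hH) (fg_mull fH d hH') ez.
  by apply: (eqv_cancell (SM Sc St)); rewrite -mulrA e mulrA -ec.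
- move=> x; have [t1 [z [St1 hG]]] := fg_dom fG x.
  have [t2 [w [St2 hH]]] := fg_dom fH z.
  exists (t2 * t1), w; split; first exact: SM.
  by apply: (mul_relI (z := t2 * z)) hH; rewrite -mulrA; exact: fg_mull.
- move=> t0 x y St0 [t [z [St hG hH]]].
  by exists (t * t0), z; rewrite -!mulrA; split=> //; exact: SM.
Qed.

Definition lfrac := {G : R -> R -> Prop | frac_graph G}.
Definition graph (q : lfrac) : R -> R -> Prop := proj1_sig q.

Lemma graphP q : frac_graph (graph q).
Proof. exact: proj2_sig q. Qed.

Lemma lfrac_ext p q : (forall x y, graph p x y -> graph q x y) -> p = q.
Proof.
case: p q => [G fG] [H fH] /= GH.
have eGH : G = H.
  apply/funext=> x; apply/funext=> y; apply/propext.
  by split; [exact: GH | exact: frac_graph_sub].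
by subst H; congr (exist _ G _); exact: Prop_irrelevance.
Qed.

HB.instance Definition _ := gen_eqMixin lfrac.
HB.instance Definition _ := gen_choiceMixin lfrac.

Definition lfrac_of r : lfrac := exist _ _ (frac_graph_rmul r).
Definition lfrac_opp q : lfrac := exist _ _ (frac_graph_opp (graphP q)).
Definition lfrac_add p q : lfrac := exist _ _ (frac_graph_add (graphP p) (graphP q)).
Definition lfrac_mul p q : lfrac := exist _ _ (frac_graph_mul (graphP p) (graphP q)).
Definition lfrac_inv s (Ss : S s) : lfrac := exist _ _ (frac_graph_inv Ss).

Lemma lfrac_addA : associative lfrac_add.
Proof.
move=> p q r; apply/esym/lfrac_ext => x y.
move=> [t [a [c [St [t' [b [d [St' pb qd e']]]] rc e]]]].
have fqr := frac_graph_add (graphP q) (graphP r).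
apply: (fg_cancel (frac_graph_add (graphP p) fqr) (t := t' * t)); first exact: SM.
apply: (add_relI (a := b) (b := d + t' * c)); rewrite -?mulrA //.
- apply: (add_relI (a := d) (b := t' * c)); rewrite -?mulrA //.
  exact: (fg_mull (graphP r)).
- by rewrite e mulrDr e' addrA.
Qed.

Lemma lfrac_addC : commutative lfrac_add.
Proof.
move=> p q; apply: lfrac_ext => x y [t [a [b [St pa qb e]]]].
by exists t, b, a; split=> //; rewrite addrC.
Qed.

Lemma lfrac_add0 : left_id (lfrac_of 0) lfrac_add.
Proof.
move=> q; apply: lfrac_ext => x y [t [a [b [St h0 qb e]]]].
change (eqv (t * x * 0) a) in h0.
apply: (fg_cancel (graphP q) St); apply: (fg_eqvr (graphP q) qb).
by rewrite e -h0 mulr0 add0r.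
Qed.

Lemma lfrac_addN : left_inverse (lfrac_of 0) lfrac_opp lfrac_add.
Proof.
move=> q; apply: lfrac_ext => x y [t [a [b [St qa qb e]]]].
have ab := fg_fun (graphP q) qa qb.
rewrite /graph /= /rmul_rel mulr0; symmetry; apply: (eqv_cancell St).
by rewrite e -ab mulr0 addrN.
Qed.

Lemma lfrac_mulA : associative lfrac_mul.
Proof.
move=> p q r; apply/esym/lfrac_ext => x y [t [z [St [t' [w [St' pw qz]]] rz]]].
exists (t' * t), w; split; [exact: SM | by rewrite -mulrA |].
by apply: (mul_relI (z := t' * z)) => //; rewrite -mulrA; exact: (fg_mull (graphP r)).
Qed.

Lemma lfrac_mul1 : left_id (lfrac_of 1) lfrac_mul.
Proof.
move=> q; apply: lfrac_ext => x y [t [z [St h1 qz]]].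
change (eqv (t * x * 1) z) in h1.
apply: (fg_cancel (graphP q) St); apply: (fg_eqvl (graphP q) qz).
by rewrite -h1 mulr1.
Qed.

Lemma lfrac_mulr1 : right_id (lfrac_of 1) lfrac_mul.
Proof.
move=> q; apply: lfrac_ext => x y [t [z [St qz h1]]].
change (eqv (z * 1) (t * y)) in h1.
apply: (fg_cancel (graphP q) St); apply: (fg_eqvr (graphP q) qz).
by rewrite -h1 mulr1.
Qed.

Lemma lfrac_mulDl : left_distributive lfrac_mul lfrac_add.
Proof.
move=> p q r; apply/esym/lfrac_ext => x y.
move=> [u [w1 [w2 [Su [t1 [z1 [St1 pz1 rz1]]] [t2 [z2 [St2 qz2 rz2]]] e]]]].
have [c [d [Sc ec]]] := eqv_Ore t1 St2.
exists (c * t1 * u), (c * z1 + d * z2); split; first by apply: SM => //; exact: SM.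
- apply: (add_relI (a := c * z1) (b := d * z2)) => //.
  + by have := fg_mull (graphP p) c pz1; rewrite !mulrA.
  + by apply: (fg_eqvl (graphP q) (fg_mull (graphP q) d qz2)); rewrite !mulrA ec.
- apply: (fg_eqvr (graphP r) (fg_add (graphP r) (fg_mull (graphP r) c rz1)
    (fg_mull (graphP r) d rz2))).
  by rewrite -(mulrA (c * t1)) e mulrDr !mulrA -ec.
Qed.

Lemma lfrac_mulDr : right_distributive lfrac_mul lfrac_add.
Proof.
move=> p q r; apply: lfrac_ext => x y [t [z [St pz [t' [a [b [St' qa rb e]]]]]]].
have fpq := frac_graph_mul (graphP p) (graphP q).
have fpr := frac_graph_mul (graphP p) (graphP r).
apply: (fg_cancel (frac_graph_add fpq fpr) (t := t' * t)); first exact: SM.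
apply: (add_relI (a := a) (b := b)); rewrite -?mulrA //.
- by apply: (mul_relI (z := t' * z)) qa; exact: (fg_mull (graphP p)).
- by apply: (mul_relI (z := t' * z)) rb; exact: (fg_mull (graphP p)).
Qed.

HB.instance Definition _ :=
  GRing.isZmodule.Build lfrac lfrac_addA lfrac_addC lfrac_add0 lfrac_addN.
HB.instance Definition _ := GRing.Zmodule_isPzRing.Build lfrac
  lfrac_mulA lfrac_mul1 lfrac_mulr1 lfrac_mulDl lfrac_mulDr.

Lemma lfrac_ofD a b : lfrac_of (a + b) = lfrac_of a + lfrac_of b.
Proof.
apply/esym/lfrac_ext => x y h.
have [t [p [q [St ha hb e]]]] : add_rel (rmul_rel a) (rmul_rel b) x y := h.
rewrite /rmul_rel in ha hb.
by apply: (eqv_cancell St); rewrite e -ha -hb !mulrDr !mulrA.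
Qed.

Lemma lfrac_ofB a b : lfrac_of (a - b) = lfrac_of a - lfrac_of b.
Proof. by apply: (addIr (lfrac_of b)); rewrite -lfrac_ofD !subrK. Qed.

Lemma lfrac_ofM a b : lfrac_of (a * b) = lfrac_of a * lfrac_of b.
Proof.
apply/esym/lfrac_ext => x y h.
have [t [z [St ha hb]]] : mul_rel (rmul_rel a) (rmul_rel b) x y := h.
rewrite /rmul_rel in ha hb.
by apply: (eqv_cancell St); rewrite -hb -ha !mulrA.
Qed.

Lemma lfrac_of1 : lfrac_of 1 = 1.
Proof. by []. Qed.

HB.instance Definition _ := GRing.isZmodMorphism.Build R lfrac lfrac_of lfrac_ofB.
HB.instance Definition _ :=
  GRing.isMonoidMorphism.Build R lfrac lfrac_of (lfrac_of1, lfrac_ofM).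

Lemma lfrac_invl s (Ss : S s) : lfrac_inv Ss * lfrac_of s = 1.
Proof.
apply: lfrac_ext => x y h.
have [t [z [St h1 h2]]] : mul_rel (inv_rel s) (rmul_rel s) x y := h.
rewrite /inv_rel /rmul_rel in h1 h2.
by rewrite /graph /= /rmul_rel mulr1; apply: (eqv_cancell St); rewrite h1 h2.
Qed.

Lemma lfrac_invr s (Ss : S s) : lfrac_of s * lfrac_inv Ss = 1.
Proof.
apply: lfrac_ext => x y h.
have [t [z [St h1 h2]]] : mul_rel (rmul_rel s) (inv_rel s) x y := h.
rewrite /inv_rel /rmul_rel in h1 h2.
rewrite /graph /= /rmul_rel mulr1; apply: (eqv_cancell St).
by apply: (eqv_cancelr Ss); rewrite h1 h2.
Qed.

Lemma lfrac_fracE q : exists s r (Ss : S s), q = lfrac_inv Ss * lfrac_of r.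
Proof.
have [t [r [St qtr]]] := fg_dom (graphP q) 1.
exists t, r, St; apply/esym/lfrac_ext => x y h.
have [t' [z [St' h1 h2]]] : mul_rel (inv_rel t) (rmul_rel r) x y := h.
rewrite /inv_rel /rmul_rel in h1 h2.
apply: (fg_cancel (graphP q) St').
apply: (fg_eqv (graphP q) (fg_mull (graphP q) z qtr) _ h2).
by rewrite mulr1 h1.
Qed.

Lemma lfrac_of_eq0 r : lfrac_of r = 0 -> torsion r.
Proof.
move=> r0; have : graph (lfrac_of r) 1 r by rewrite /graph /= /rmul_rel mul1r.
by rewrite r0 /graph /= /rmul_rel mulr0 => /(@symmetry _ eqv _); rewrite /eqv subr0.
Qed.

Lemma lfrac_nontrivial : (1 : lfrac) <> 0.
Proof. by move=> /lfrac_of_eq0; apply: torsion_notin. Qed.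

Section Lift.
Variables (B : pzRingType) (f : {rmorphism R -> B}).
Hypothesis fS : inverts S f.

Lemma f_torsion z : torsion z -> f z = 0.
Proof.
move=> [t St /(la_ker fS)]; rewrite rmorphM => ftz0.
by have [y [ys _]] := fS St; rewrite -[f z]mul1r -ys -mulrA ftz0 mulr0.
Qed.

Lemma f_eqv x y : eqv x y -> f x = f y.
Proof. by move=> /f_torsion; rewrite rmorphB => /subr0_eq. Qed.

Lemma f_cancel s u v : S s -> f s * u = f s * v -> u = v.
Proof.
move=> Ss e; have [y [ys _]] := fS Ss.
by rewrite -[u]mul1r -[v]mul1r -ys -!mulrA e.
Qed.

Definition lift_spec q b := forall x y, graph q x y -> f x * b = f y.

Lemma lift_ex q : exists b, lift_spec q b.
Proof.
have [t [r [St qtr]]] := fg_dom (graphP q) 1; rewrite mulr1 in qtr.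
have [y [_ ty]] := fS St.
exists (y * f r) => x z qxz.
have [c [d [Sc e]]] := eqv_Ore x St.
have e2 := fg_fun_eqv (graphP q) (fg_mull (graphP q) c qxz)
  (fg_mull (graphP q) d qtr) e.
apply: (f_cancel Sc).
by rewrite mulrA -rmorphM (f_eqv e) rmorphM -mulrA (mulrA (f t)) ty mul1r
  -rmorphM -(f_eqv e2) rmorphM.
Qed.

Definition lift q : B := proj1_sig (cid (lift_ex q)).

Lemma liftP q : lift_spec q (lift q).
Proof. exact: proj2_sig (cid (lift_ex q)). Qed.

Lemma lift_eq q t r b : S t -> graph q t r -> f t * b = f r -> lift q = b.
Proof. by move=> St qtr ftb; apply: (f_cancel St); rewrite (liftP qtr) ftb. Qed.

Lemma lift_of r : lift (lfrac_of r) = f r.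
Proof.
apply: (lift_eq (t := 1) (r := r) S1); last by rewrite rmorph1 mul1r.
by rewrite /graph /= /rmul_rel mul1r.
Qed.

Lemma liftD p q : lift (p + q) = lift p + lift q.
Proof.
have [t1 [a [St1 pa]]] := fg_dom (graphP p) 1.
have [t2 [b [St2 qb]]] := fg_dom (graphP q) (t1 * 1).
have pt2a := fg_mull (graphP p) t2 pa.
apply: (lift_eq (t := t2 * (t1 * 1)) (r := t2 * a + b)).
- by apply: SM => //; apply: SM.
- exact: (add_relI (a := t2 * a) (b := b)).
- by rewrite mulrDr (liftP pt2a) (liftP qb) rmorphD.
Qed.

Lemma liftB p q : lift (p - q) = lift p - lift q.
Proof. by apply: (addIr (lift q)); rewrite -liftD !subrK. Qed.

Lemma liftM p q : lift (p * q) = lift p * lift q.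
Proof.
have [t1 [z [St1 pz]]] := fg_dom (graphP p) 1.
have [t2 [w [St2 qw]]] := fg_dom (graphP q) z.
have pt2z := fg_mull (graphP p) t2 pz.
apply: (lift_eq (t := t2 * (t1 * 1)) (r := w)).
- by apply: SM => //; apply: SM.
- exact: (mul_relI pt2z qw).
- by rewrite mulrA (liftP pt2z) (liftP qw).
Qed.

Lemma lift1 : lift 1 = 1.
Proof. by rewrite -lfrac_of1 lift_of rmorph1. Qed.

HB.instance Definition _ := GRing.isZmodMorphism.Build lfrac B lift liftB.
HB.instance Definition _ := GRing.isMonoidMorphism.Build lfrac B lift (lift1, liftM).

Definition lift_rmorph : {rmorphism lfrac -> B} := lift.

End Lift.

Lemma lfrac_univ_loc : univ_loc S lfrac lfrac_of.
Proof.
split=> [s Ss | B f fS].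
  by exists (lfrac_inv Ss); split; [exact: lfrac_invl | exact: lfrac_invr].
exists (lift_rmorph fS); split=> [r | g g_of q]; first exact: lift_of.
have [s [r [Ss ->]]] := lfrac_fracE q.
rewrite !rmorphM g_of /= lift_of; congr (_ * _).
have g_inv : g (lfrac_inv Ss) * f s = 1 by rewrite -g_of -rmorphM lfrac_invl rmorph1.
have lift_inv : f s * lift fS (lfrac_inv Ss) = 1.
  by rewrite -(lift_of fS) -liftM lfrac_invr lift1.
by rewrite -[LHS]mulr1 -lift_inv mulrA g_inv mul1r.
Qed.

Lemma Lpre_l_localization : left_localizable S /\ (forall r, ass S r -> torsion r).
Proof.
split; last by move=> r /(_ _ _ lfrac_univ_loc); exact: lfrac_of_eq0.
exists lfrac, lfrac_of; split; first exact: lfrac_univ_loc.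
split=> [|q]; first exact: lfrac_nontrivial.
have [s [r [Ss ->]]] := lfrac_fracE q.
exists s, r, (lfrac_inv Ss).
by split=> //; split; [exact: lfrac_invl | split; [exact: lfrac_invr |]].
Qed.

End LeftOreLocalization.

Lemma Lpre_l_perfect (R : pzRingType) (S : R -> Prop) :
  mult_set S -> Lpre_l S -> perfect_left_localizable S.
Proof.
move=> mS LS; have [loc ass_tor] := Lpre_l_localization mS LS.
split=> // r; split=> [/ass_tor [t St /la_a] | /a_ass //].
exact: a_rreg St r.
Qed.

(** * Passing to the opposite ring *)

Section AntiMorphism.
Variables (A B : pzRingType) (f : A -> B).
Hypotheses (fB : {morph f : x y / x - y}) (f1 : f 1 = 1)
  (fM : forall x y, f (x * y) = f y * f x).

Let f_to_conv : A -> B^c := f.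
HB.instance Definition _ := GRing.isZmodMorphism.Build A B^c f_to_conv fB.
HB.instance Definition _ :=
  GRing.isMonoidMorphism.Build A B^c f_to_conv (f1, fM).
Definition antimorph_to_conv : {rmorphism A -> B^c} := f_to_conv.

Let f_of_conv : A^c -> B := f.
HB.instance Definition _ := GRing.isZmodMorphism.Build A^c B f_of_conv fB.
HB.instance Definition _ :=
  GRing.isMonoidMorphism.Build A^c B f_of_conv (f1, fun x y => fM y x).
Definition antimorph_of_conv : {rmorphism A^c -> B} := f_of_conv.

End AntiMorphism.

Section Converse.
Variables (R : pzRingType) (S : R -> Prop).

Definition conv_rmorph (A : pzRingType) (f : {rmorphism R -> A}) :
    {rmorphism R^c -> A^c} :=
  @antimorph_to_conv R^c A f (rmorphB f) (rmorph1 f) (fun x y => rmorphM f y x).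

Definition unconv_rmorph (A : pzRingType) (sigma : {rmorphism R^c -> A}) :
    {rmorphism R -> A^c} :=
  @antimorph_to_conv R A sigma (rmorphB sigma) (rmorph1 sigma)
    (fun x y => rmorphM sigma y x).

Lemma univ_loc_conv (A : pzRingType) (sigma : {rmorphism R^c -> A}) :
  univ_loc (S : R^c -> Prop) A sigma -> univ_loc S A^c (unconv_rmorph sigma).
Proof.
move=> [sigmaS sigma_univ]; split=> [s Ss | B f fS].
  by have [y [ys sy]] := sigmaS s Ss; exists y.
have fcS : inverts (S : R^c -> Prop) (conv_rmorph f).
  by move=> s Ss; have [y [ys sy]] := fS s Ss; exists y.
have [g [g_sigma g_uniq]] := sigma_univ _ _ fcS.
exists (@antimorph_of_conv A B g (rmorphB g) (rmorph1 g) (rmorphM g)).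
split=> [// | h h_sigma].
exact: g_uniq (@antimorph_to_conv A B h (rmorphB h) (rmorph1 h)
  (fun x y => rmorphM h y x)) h_sigma.
Qed.

Lemma ass_conv r : ass S r -> ass (S : R^c -> Prop) r.
Proof. by move=> h A sigma /univ_loc_conv /h. Qed.

Lemma right_localizable_conv :
  left_localizable (S : R^c -> Prop) -> right_localizable S.
Proof.
move=> [A [sigma [U [A_nz frac]]]].
exists A^c, (unconv_rmorph sigma); split; first exact: univ_loc_conv.
split=> // q; have [s [r [y [Ss [ys [sy ->]]]]]] := frac q.
by exists s, r, y.
Qed.

Lemma Lpost_r_conv : Lpost_r S -> Lpre_l (S : R^c -> Prop).
Proof. by rewrite /Lpre_l la_conv. Qed.

End Converse.

Lemma Lpost_r_perfect (R : pzRingType) (S : R -> Prop) :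
  mult_set S -> Lpost_r S -> perfect_right_localizable S.
Proof.
move=> mS LS.
have [loc ass_tor] := Lpre_l_localization (mult_set_conv mS) (Lpost_r_conv LS).
split=> [|r]; first exact: right_localizable_conv.
split=> [/ass_conv/ass_tor [t St] | /a_ass //].
by rewrite la_conv => /ra_a; exact: a_lreg St r.
Qed.

(** * Ore sets *)

Section OreSets.
Variables (R : pzRingType) (S : R -> Prop).

Lemma left_Ore_mod_of (I : R -> Prop) :
  is_ideal I -> (forall s, S s -> ~ I s) -> left_Ore S -> left_Ore_mod I S.
Proof.
move=> iI SnI LO; split=> // r s Ss; have [s' [r' [Ss' e]]] := LO r s Ss.
by exists s', r'; split=> //; rewrite e subrr; exact: iI.1.
Qed.

Lemma right_Ore_mod_of (I : R -> Prop) :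
  is_ideal I -> (forall s, S s -> ~ I s) -> right_Ore S -> right_Ore_mod I S.
Proof.
move=> iI SnI RO; split=> // r s Ss; have [s' [r' [Ss' e]]] := RO r s Ss.
by exists s', r'; split=> //; rewrite e subrr; exact: iI.1.
Qed.

Lemma LOre_Lpre : LOre_l S -> Lpre_l S.
Proof.
move=> [[A [sigma [U [A_nz _]]]] LO]; apply: left_Ore_mod_of (la_ideal S) _ LO.
by move=> s Ss /la_a/a_ass; exact: ass_notin U A_nz Ss.
Qed.

Lemma LOre_Lpost : LOre_r S -> Lpost_r S.
Proof.
move=> [[A [sigma [U [A_nz _]]]] RO]; apply: right_Ore_mod_of (ra_ideal S) _ RO.
by move=> s Ss /ra_a/a_ass; exact: ass_notin U A_nz Ss.
Qed.

Hypothesis mS : mult_set S.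

Lemma LOre_l_iff_Lpre : LOre_l S <-> Lpre_l S /\ left_Ore S.
Proof.
split=> [LS | [LS LO]]; first by split; [exact: LOre_Lpre | exact: LS.2].
by split=> //; exact: (Lpre_l_perfect mS LS).1.
Qed.

Lemma LOre_l_iff_perfect : LOre_l S <-> perfect_left_localizable S /\ left_Ore S.
Proof.
split=> [LS | [[LS _] LO] //]; split; last exact: LS.2.
exact: Lpre_l_perfect mS (LOre_Lpre LS).
Qed.

Lemma LOre_r_iff_Lpost : LOre_r S <-> Lpost_r S /\ right_Ore S.
Proof.
split=> [LS | [LS RO]]; first by split; [exact: LOre_Lpost | exact: LS.2].
by split=> //; exact: (Lpost_r_perfect mS LS).1.
Qed.

Lemma LOre_r_iff_perfect : LOre_r S <-> perfect_right_localizable S /\ right_Ore S.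
Proof.
split=> [LS | [[LS _] RO] //]; split; last exact: LS.2.
exact: Lpost_r_perfect mS (LOre_Lpost LS).
Qed.

Lemma Lpre_post_perfect : Lpre_post_lr S -> perfect_localizable S.
Proof.
move=> [LS RS]; have [Ll ass_a] := Lpre_l_perfect mS LS.
by split=> //; split=> //; exact: (Lpost_r_perfect mS RS).1.
Qed.

Definition sandwich_null r := exists s t, [/\ S s, S t & s * r * t = 0].

Hypothesis OS : Ore S.

Lemma sandwich_null_ideal : is_ideal sandwich_null.
Proof.
have [S1 [_ SM]] := mS; have [LO RO] := OS.
split; first by exists 1, 1; rewrite mulr0 mul0r.
split=> [x y [s1 [t1 [Ss1 St1 h1]]] [s2 [t2 [Ss2 St2 h2]]] | r x [s [t [Ss St h]]]].
  have [s' [r' [Ss' Es]]] := LO s1 s2 Ss2; have [v [u [Sv Ev]]] := RO t2 t1 St1.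
  exists (s' * s1), (t2 * v); split; [exact: SM | exact: SM |].
  have x0 : s' * s1 * x * (t2 * v) = 0.
    by rewrite Ev !mulrA -2!(mulrA s') h1 mulr0 mul0r.
  have y0 : s' * s1 * y * (t2 * v) = 0.
    by rewrite Es !mulrA -2!(mulrA r') h2 mulr0 mul0r.
  by rewrite mulrBr mulrBl x0 y0 subrr.
have [s' [r' [Ss' Es]]] := LO r s Ss; have [v [u [Sv Ev]]] := RO r t St.
split; [exists s', t | exists s, v]; split=> //.
- by rewrite mulrA Es -!mulrA (mulrA s) h mulr0.
- by rewrite mulrA -mulrA Ev !mulrA h mul0r.
Qed.

Lemma sandwich_null_lreg s0 : S s0 -> lreg_mod sandwich_null s0.
Proof.
move=> Ss0 x [s [t [Ss St h]]]; exists s, (s0 * t).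
by split=> //; [exact: mS.2.2 | rewrite -h !mulrA].
Qed.

Lemma sandwich_null_rreg s0 : S s0 -> rreg_mod sandwich_null s0.
Proof.
move=> Ss0 x [s [t [Ss St h]]]; exists (s * s0), t.
by split=> //; [exact: mS.2.2 | rewrite -h !mulrA].
Qed.

Lemma sandwich_null_notin s : S s -> ~ sandwich_null s.
Proof.
have [_ [S0 SM]] := mS; move=> Ss [s' [t [Ss' St h]]].
by apply: S0; rewrite -h; apply: SM (SM _ _ Ss' Ss) St.
Qed.

Lemma Ore_Lpre_post : Lpre_post_lr S.
Proof.
split.
- apply: left_Ore_mod_of (la_ideal S) _ OS.1 => s Ss.
  by move/(_ _ sandwich_null_ideal sandwich_null_lreg); exact: sandwich_null_notin.
- apply: right_Ore_mod_of (ra_ideal S) _ OS.2 => s Ss.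
  by move/(_ _ sandwich_null_ideal sandwich_null_rreg); exact: sandwich_null_notin.
Qed.

End OreSets.

Theorem proposition1p4 (R : pzRingType) :
  (* 1. *)
  ((forall S : R -> Prop, mult_set S -> LOre_l S -> Lpre_l S) /\
   (forall S : R -> Prop, mult_set S -> Lpre_l S -> perfect_left_localizable S) /\
   (forall S : R -> Prop, mult_set S -> (LOre_l S <-> Lpre_l S /\ left_Ore S)) /\
   (forall S : R -> Prop, mult_set S ->
      (LOre_l S <-> perfect_left_localizable S /\ left_Ore S))) /\
  (* 2. *)
  ((forall S : R -> Prop, mult_set S -> LOre_r S -> Lpost_r S) /\
   (forall S : R -> Prop, mult_set S -> Lpost_r S -> perfect_right_localizable S) /\
   (forall S : R -> Prop, mult_set S -> (LOre_r S <-> Lpost_r S /\ right_Ore S)) /\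
   (forall S : R -> Prop, mult_set S ->
      (LOre_r S <-> perfect_right_localizable S /\ right_Ore S))) /\
  (* 3. *)
  ((forall S : R -> Prop, mult_set S -> Ore S -> Lpre_post_lr S) /\
   (forall S : R -> Prop, mult_set S -> Lpre_post_lr S -> perfect_localizable S)).
Proof.
split; [|split].
- split; [by move=> S _; exact: LOre_Lpre | split; first exact: Lpre_l_perfect].
  by split; [exact: LOre_l_iff_Lpre | exact: LOre_l_iff_perfect].
- split; [by move=> S _; exact: LOre_Lpost | split; first exact: Lpost_r_perfect].
  by split; [exact: LOre_r_iff_Lpost | exact: LOre_r_iff_perfect].
- by split; [exact: Ore_Lpre_post | exact: Lpre_post_perfect].
Qed.
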